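(* Let $\mathcal{I}$ be the set of channels $\rho\mapsto U\rho U^\dagger$ with $U=H^{\otimes n}DH^{\otimes n}$, where $D$ is a product of gates from $\{Z,CZ\}$ (acting on arbitrary qubits/pairs of qubits) containing at least one $CZ$ gate. There is an absolute constant $C$ such that for every sample $S=(z_1,\ldots,z_m)$ with $z_i\in\mathbb{F}_2^n\times\mathbb{F}_2^n$, \[ \hat{R}_S(\mathcal{F}(\mathcal{I}))\le\frac{C\,n}{\sqrt m}\max_{\Phi\in\mathcal{I}}\|\vec f_\Phi\|_\infty . \]
   Context: $H$ is the Hadamard gate, $Z=\mathrm{diag}(1,-1)$, $CZ$ the controlled-$Z$ gate. For a channel $\Phi$ on $n$ qubits, $f_\Phi(x,y)=\mathrm{Tr}[\Phi(|x\rangle\langle x|)\,|y\rangle\langle y|]$ for $x,y\in\mathbb{F}_2^n$; $\mathcal{F}(\Omega)=\{f_\Phi:\Phi\in\Omega\}$; $\vec f_\Phi=(f_\Phi(z_1),\ldots,f_\Phi(z_m))$. Empirical Rademacher complexity: $\hat{R}_S(\mathcal{G})=\mathbb{E}_{\epsilon}[\sup_{g\in\mathcal{G}}\frac1m\sum_i\epsilon_i g(z_i)]$, $\epsilon_i$ i.i.d. uniform on $\{\pm1\}$. *)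

From HB Require Import structures.
From mathcomp Require Import all_boot all_order all_algebra.
From mathcomp Require Import complex mxtens.
From mathcomp Require Import boolp classical_sets reals.

Set Implicit Arguments.
Unset Strict Implicit.
Unset Printing Implicit Defensive.

Import Order.TTheory GRing.Theory Num.Theory.
Local Open Scope ring_scope.
Local Open Scope classical_set_scope.
Local Open Scope complex_scope.

Section Quantum.
Variable R : realType.
Local Notation C := (complex R).

(* n-fold tensor product  F 0 (x) F 1 (x) ... (x) F (n-1)  of (p x q) matrices;
   qubit i is tensor factor i. *)
Fixpoint tensn {p q : nat} (n : nat) : ('I_n -> 'M[C]_(p, q)) -> 'M[C]_(p ^ n, q ^ n) :=
  match n return ('I_n -> 'M[C]_(p, q)) -> 'M[C]_(p ^ n, q ^ n) with
  | 0 => fun _ => 1%:M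
  | n'.+1 => fun F => castmx (esym (expnS p n'), esym (expnS q n'))
                          (F ord0 *t tensn (fun i : 'I_n' => F (lift ord0 i)))
  end.

Definition Hmat : 'M[C]_2 :=
  \matrix_(a < 2, b < 2)
     (((Num.sqrt (2 : R))^-1)%:C * (if (a == 1 :> nat) && (b == 1 :> nat) then -1 else 1)).
Definition Zmat : 'M[C]_2 := \matrix_(a < 2, b < 2) (if a == b then (if a == 1 :> nat then -1 else 1) else 0).
Definition P0 : 'M[C]_2 := \matrix_(a < 2, b < 2) (if (a == 0 :> nat) && (b == 0 :> nat) then 1 else 0).
Definition P1 : 'M[C]_2 := \matrix_(a < 2, b < 2) (if (a == 1 :> nat) && (b == 1 :> nat) then 1 else 0).

Definition ket1 (b : 'F_2) : 'cV[C]_2 := \col_(a < 2) (if (a : nat) == (b : nat) then 1 else 0).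

Definition Hn (n : nat) : 'M[C]_(2 ^ n) := tensn (fun _ : 'I_n => Hmat).

Definition Zgate (n : nat) (i : 'I_n) : 'M[C]_(2 ^ n) :=
  tensn (fun k : 'I_n => if k == i then Zmat else 1%:M).

Definition CZgate (n : nat) (i j : 'I_n) : 'M[C]_(2 ^ n) :=
  tensn (fun k : 'I_n => if k == i then P0 else 1%:M)
  + tensn (fun k : 'I_n => if k == i then P1 else if k == j then Zmat else 1%:M).

Inductive gate (n : nat) := GZ of 'I_n | GCZ of 'I_n & 'I_n.

Definition gate_mx (n : nat) (g : gate n) : 'M[C]_(2 ^ n) :=
  match g with GZ i => Zgate i | GCZ i j => CZgate i j end.

Definition gate_ok (n : nat) (g : gate n) : bool :=
  match g with GZ _ => true | GCZ i j => i != j end.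
Definition is_CZ (n : nat) (g : gate n) : bool :=
  match g with GZ _ => false | GCZ _ _ => true end.

Definition circuit_mx (n : nat) (gs : seq (gate n)) : 'M[C]_(2 ^ n) :=
  foldr (fun g M => gate_mx g *m M) 1%:M gs.

Definition adjmx (k : nat) (U : 'M[C]_k) : 'M[C]_k := (map_mx (@conjc R) U)^T.

Definition channel (n : nat) := 'M[C]_(2 ^ n) -> 'M[C]_(2 ^ n).

Definition unitary_channel (n : nat) (U : 'M[C]_(2 ^ n)) : channel n :=
  fun rho => U *m rho *m adjmx U.

Definition Iclass (n : nat) : set (channel n) :=
  [set Phi | exists gs : seq (gate n),
      [/\ all (@gate_ok n) gs, has (@is_CZ n) gs &
          Phi = unitary_channel (Hn n *m circuit_mx gs *m Hn n)]].

Definition bits (n : nat) := 'rV['F_2]_n.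

Definition ket (n : nat) (x : bits n) : 'M[C]_(2 ^ n, 1 ^ n) :=
  tensn (fun i : 'I_n => ket1 (x 0 i)).
Definition ketbra (n : nat) (x : bits n) : 'M[C]_(2 ^ n) :=
  ket x *m (map_mx (@conjc R) (ket x))^T.

(* f_Phi(x,y) = Tr[Phi(|x><x|) |y><y|]  (a real number; we take the real part of the
   complex trace) *)
Definition fPhi (n : nat) (Phi : channel n) (z : bits n * bits n) : R :=
  complex.Re (\tr (Phi (ketbra z.1) *m ketbra z.2)).

Definition Fclass (n : nat) (Omega : set (channel n)) : set (bits n * bits n -> R) :=
  [set fPhi Phi | Phi in Omega].

(* empirical Rademacher complexity: expectation over eps uniform on {+-1}^m
   (eps_i = +1 iff the bool is true) of the supremum *)
Definition sgnb (b : bool) : R := if b then 1 else -1.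
Definition rademacher {X : Type} (m : nat) (G : set (X -> R)) (S : 'I_m -> X) : R :=
  (2 ^+ m)^-1 * \sum_(eps : {ffun 'I_m -> bool})
     sup [set (m%:R)^-1 * \sum_(i < m) sgnb (eps i) * g (S i) | g in G].

Definition supnorm_on {X : Type} (m : nat) (f : X -> R) (S : 'I_m -> X) : R :=
  \big[Num.max/0]_(i < m) `|f (S i)|.

End Quantum.
Arguments Iclass {R} n.

From HB Require Import structures.
From mathcomp Require Import all_boot all_order all_algebra.
From mathcomp Require Import complex mxtens.
From mathcomp Require Import boolp classical_sets reals.
From mathcomp Require Import sequences exp.
From mathcomp Require Import ring lra zify.
Import Order.TTheory GRing.Theory Num.Theory.
Local Open Scope ring_scope.
Local Open Scope classical_set_scope.
Set Implicit Arguments. Unset Strict Implicit. Unset Printing Implicit Defensive.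

(* For a family of sign sums indexed by a finite set
     of size at most 2^K with coefficients bounded by M, Jensen's inequality, a union
     bound and cosh t <= 1 + 2 t^2 <= exp (2 t^2) give, for 0 < lam with lam M <= 1/2,
       lam * E_eps [max_p sum_i eps_i a_p(i)] <= K + 2 m (lam M)^2,
     and the choice lam = N / (sqrt m M) yields the bound 4 N sqrt m M when K <= 2 N^2.
     A finitely parametrized class attains the supremum in the definition of the
     empirical Rademacher complexity, so the lemma applies to it directly.
   - Finiteness of I.  Every gate is diagonal with entries squaring to 1, so a circuit
     only depends on the parity of the number of occurrences of each of the n + n^2
     possible gates: I is the image of at most 2^(n + n^2) parity vectors, and n >= 1
     as soon as a CZ gate exists.
   With K = n + n^2 <= 2 n^2 and N = n the theorem follows with the constant C = 4. *)

Section Massart.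
Variable R : realType.

Lemma cosh_le (t : R) : t ^+ 2 <= 4^-1 ->
  2^-1 * (expR t + expR (- t)) <= 1 + 2 * t ^+ 2.
Proof.
move=> t_small.
have lower_neg : 1 - t <= expR (- t) by exact: expR_ge1Dx.
have lower_pos : 1 + t <= expR t by exact: expR_ge1Dx.
have prod1 : expR t * expR (- t) = 1 by rewrite -expRD subrr expR0.
have := expR_gt0 t; have := expR_gt0 (- t).
move: lower_neg lower_pos prod1; set u := expR t; set v := expR (- t).
move=> lower_neg lower_pos prod1 v_gt0 u_gt0.
have hu : u * (1 - t) <= 1 by rewrite -[X in _ <= X]prod1 ler_pM2l.
have hv : v * (1 + t) <= 1 by rewrite -[X in _ <= X]prod1 mulrC ler_pM2r.
have t_range : t <= 2^-1 /\ - 2^-1 <= t by split; nra.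
nra.
Qed.

Lemma expR_mean_le (T : finType) (x : T -> R) : (0 < #|T|)%N ->
  expR (#|T|%:R^-1 * \sum_e x e) <= #|T|%:R^-1 * \sum_e expR (x e).
Proof.
move=> T_gt0; set c := #|T|%:R^-1 * \sum_e x e.
have card_gt0 : (0 : R) < #|T|%:R by rewrite ltr0n.
have tangent e : expR c * (1 + (x e - c)) <= expR (x e).
  rewrite -[X in _ <= expR X](subrK c (x e)) expRD mulrC.
  by rewrite ler_pM2r ?expR_gt0 // expR_ge1Dx.
have sum_tangent : \sum_e (1 + (x e - c)) = #|T|%:R.
  have sum1 : \sum_(e : T) (1 : R) = #|T|%:R by rewrite sumr_const.
  have sumc : \sum_(e : T) c = #|T|%:R * c by rewrite sumr_const mulr_natl.
  rewrite big_split /= sumrB sum1 sumc.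
  by rewrite /c mulrA mulfV ?gt_eqF // mul1r subrr addr0.
apply: le_trans (_ : #|T|%:R^-1 * \sum_e (expR c * (1 + (x e - c))) <= _).
  by rewrite -mulr_sumr sum_tangent mulrCA mulVf ?mulr1 // gt_eqF.
by rewrite ler_pM2l ?invr_gt0 // ler_sum.
Qed.

Definition sign_mean (m : nat) (F : {ffun 'I_m -> bool} -> R) : R :=
  (2 ^+ m)^-1 * \sum_e F e.

Definition sign_sum (m : nat) (a : 'I_m -> R) (e : {ffun 'I_m -> bool}) : R :=
  \sum_(i < m) sgnb R (e i) * a i.

Lemma card_signs (m : nat) : #|{ffun 'I_m -> bool}| = (2 ^ m)%N.
Proof. by rewrite card_ffun card_bool card_ord. Qed.

Lemma expR_sign_mean_le (m : nat) (F : {ffun 'I_m -> bool} -> R) :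
  expR (sign_mean F) <= sign_mean (fun e => expR (F e)).
Proof.
have := @expR_mean_le {ffun 'I_m -> bool} F.
by rewrite /sign_mean card_signs natrX expn_gt0; apply.
Qed.

(* Moment generating function of a Rademacher sum: the sign vector factorizes into
   independent coordinates, each controlled by cosh_le. *)
Lemma sign_mean_mgf (m : nat) (a : 'I_m -> R) (M lam : R) :
  0 < lam -> lam * M <= 2^-1 -> (forall i, `|a i| <= M) ->
  sign_mean (fun e => expR (lam * sign_sum a e)) <= expR (2 * (lam * M) ^+ 2) ^+ m.
Proof.
move=> lam_gt0 lamM_small a_le.
pose f (i : 'I_m) (b : bool) := expR (lam * (sgnb R b * a i)).
rewrite /sign_mean.
have -> : \sum_e expR (lam * sign_sum a e) = \sum_(e : {ffun 'I_m -> bool}) \prod_i f i (e i).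
  by apply: eq_bigr => e _; rewrite /sign_sum mulr_sumr expR_sum.
rewrite -(bigA_distr_bigA f) /=.
rewrite -exprVn -[in X in X * _](card_ord m) -prodr_const -big_split /=.
rewrite -[in X in _ <= X](card_ord m) -prodr_const.
apply: ler_prod => i _; apply/andP; split.
  by rewrite mulr_ge0 ?invr_ge0 ?ler0n // sumr_ge0 // => b _; rewrite expR_ge0.
rewrite big_bool /f /= mul1r mulN1r mulrN.
have M_ge0 : 0 <= M by apply: le_trans (a_le i).
have ai_sq : (lam * a i) ^+ 2 <= (lam * M) ^+ 2.
  have := a_le i; rewrite ler_norml => /andP [lo hi].
  have : 0 <= (M - a i) * (M + a i) by apply: mulr_ge0; lra.
  rewrite !exprMn ler_pM2l ?exprn_gt0 //; nra.
apply: le_trans (cosh_le _) _.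
  have : 0 <= lam * M by rewrite mulr_ge0 // ltW.
  move: ai_sq lamM_small; set y := lam * M; nra.
by apply: le_trans _ (expR_ge1Dx _); rewrite lerD2l ler_pM2l.
Qed.

Lemma card_le_expR (I : finType) (K : nat) : (#|I| <= 2 ^ K)%N -> #|I|%:R <= expR K%:R :> R.
Proof.
move=> card_le; apply: le_trans (_ : (2 : R) ^+ K <= _); first by rewrite -natrX ler_nat.
have two_le_e : (2 : R) <= expR 1 by have := expR_ge1Dx (1 : R); lra.
by rewrite -[X in expR X]mulr1 expRM_natl lerXn2r // nnegrE // expR_ge0.
Qed.

(* Massart's lemma for an arbitrary selection rule pick : eps |-> p with P p, in
   particular for a selection of maximizers. *)
Lemma massart (m K : nat) (I : finType) (P : pred I) (a : I -> 'I_m -> R) (M lam : R)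
    (pick : {ffun 'I_m -> bool} -> I) :
  (#|I| <= 2 ^ K)%N -> (forall p, P p -> forall i, `|a p i| <= M) ->
  (forall e, P (pick e)) -> 0 < lam -> lam * M <= 2^-1 ->
  lam * sign_mean (fun e => sign_sum (a (pick e)) e) <= K%:R + m%:R * (2 * (lam * M) ^+ 2).
Proof.
move=> card_le a_le pickP lam_gt0 lamM_small.
pose B := expR (2 * (lam * M) ^+ 2).
have B_ge0 : 0 <= B ^+ m by rewrite exprn_ge0 // expR_ge0.
have sign_meanZ (F : {ffun 'I_m -> bool} -> R) :
    lam * sign_mean F = sign_mean (fun e => lam * F e).
  by rewrite /sign_mean mulrCA mulr_sumr.
have union_bound : sign_mean (fun e => expR (lam * sign_sum (a (pick e)) e))
    <= \sum_(p | P p) sign_mean (fun e => expR (lam * sign_sum (a p) e)).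
  rewrite /sign_mean -mulr_sumr exchange_big /= ler_pM2l ?invr_gt0 ?exprn_gt0 //.
  apply: ler_sum => e _; rewrite (bigD1 (pick e)) //= lerDl.
  by apply: sumr_ge0 => p _; rewrite expR_ge0.
have sum_le : \sum_(p | P p) sign_mean (fun e => expR (lam * sign_sum (a p) e))
    <= expR K%:R * B ^+ m.
  apply: le_trans (_ : \sum_(p : I) B ^+ m <= _).
    rewrite [X in _ <= X](bigID P) /= -[X in X <= _]addr0 lerD ?sumr_ge0 //.
    by apply: ler_sum => p Pp; apply: sign_mean_mgf => //; apply: a_le.
  by rewrite sumr_const -[_ *+ _]mulr_natl ler_wpM2r // card_le_expR.
rewrite -ler_expR sign_meanZ expRD expRM_natl -/B.
exact: le_trans (expR_sign_mean_le _) (le_trans union_bound sum_le).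
Qed.

(* The trivial bound E <= m M, used when the optimal lam violates lam M <= 1/2. *)
Lemma sign_mean_sign_sum_le (m : nat) (I : Type) (P : I -> Prop) (a : I -> 'I_m -> R) (M : R)
    (pick : {ffun 'I_m -> bool} -> I) :
  (forall p, P p -> forall i, `|a p i| <= M) -> (forall e, P (pick e)) ->
  sign_mean (fun e => sign_sum (a (pick e)) e) <= m%:R * M.
Proof.
move=> a_le pickP.
have term_le e : sign_sum (a (pick e)) e <= m%:R * M.
  have -> : m%:R * M = \sum_(i < m) M by rewrite sumr_const card_ord mulr_natl.
  apply: ler_sum => i _.
  apply: le_trans (ler_norm _) _; rewrite normrM.
  by case: (e i); rewrite /sgnb ?normrN normr1 mul1r; apply: a_le.
apply: le_trans (_ : sign_mean (fun _ : {ffun 'I_m -> bool} => m%:R * M) <= _).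
  by rewrite /sign_mean ler_pM2l ?invr_gt0 ?exprn_gt0 // ler_sum.
rewrite /sign_mean sumr_const card_signs -[_ *+ 2 ^ m]mulr_natr natrX mulrC mulfK //.
by rewrite gt_eqF // exprn_gt0.
Qed.

Lemma massart_sqrt (m K : nat) (I : finType) (P : pred I) (a : I -> 'I_m -> R) (M N : R)
    (pick : {ffun 'I_m -> bool} -> I) :
  (0 < m)%N -> (#|I| <= 2 ^ K)%N -> 1 <= N -> K%:R <= 2 * N ^+ 2 ->
  (forall p, P p -> forall i, `|a p i| <= M) -> (forall e, P (pick e)) ->
  sign_mean (fun e => sign_sum (a (pick e)) e) <= 4 * N * Num.sqrt m%:R * M.
Proof.
move=> m_gt0 card_le N_ge1 K_le a_le pickP.
have M_ge0 : 0 <= M.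
  exact: le_trans (a_le _ (pickP [ffun=> true]) (Ordinal m_gt0)).
have := sign_mean_sign_sum_le a_le pickP.
have := sqrtr_ge0 (m%:R : R); have := sqr_sqrtr (ler0n R m).
set E := sign_mean _; set s := Num.sqrt _ => s_sq s_ge0 E_triv.
rewrite -s_sq in E_triv.
have [s_small|s_large] := ltP s (2 * N).
  apply: le_trans E_triv _; rewrite -subr_ge0.
  have -> : 4 * N * s * M - s ^+ 2 * M = s * M * (4 * N - s) by ring.
  by rewrite !mulr_ge0 //; lra.
have [M_le0|M_gt0] := leP M 0.
  have M0 : M = 0 by apply/le_anti; rewrite M_le0 M_ge0.
  by move: E_triv; rewrite M0 !mulr0.
have s_gt0 : 0 < s by lra.
pose lam := N / (s * M).
have lam_gt0 : 0 < lam by rewrite divr_gt0 ?mulr_gt0 //; lra.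
have lamM : lam * M = N / s by rewrite /lam; field; rewrite ?gt_eqF.
have lamM_small : lam * M <= 2^-1 by rewrite lamM ler_pdivrMr //; lra.
have := massart card_le a_le pickP lam_gt0 lamM_small.
rewrite -s_sq lamM.
have -> : s ^+ 2 * (2 * (N / s) ^+ 2) = 2 * N ^+ 2 by field; rewrite gt_eqF.
have target : lam * (4 * N * s * M) = 4 * N ^+ 2 by rewrite /lam; field; rewrite ?gt_eqF.
rewrite -/E => massart_bound.
by rewrite -(ler_pM2l lam_gt0) target; lra.
Qed.

Lemma massart_normalized (m K : nat) (I : finType) (P : pred I) (a : I -> 'I_m -> R) (M N : R)
    (pick : {ffun 'I_m -> bool} -> I) :
  (0 < m)%N -> (#|I| <= 2 ^ K)%N -> 1 <= N -> K%:R <= 2 * N ^+ 2 ->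
  (forall p, P p -> forall i, `|a p i| <= M) -> (forall e, P (pick e)) ->
  m%:R^-1 * sign_mean (fun e => sign_sum (a (pick e)) e) <= 4 * N / Num.sqrt m%:R * M.
Proof.
move=> m_gt0 card_le N_ge1 K_le a_le pickP.
have s_gt0 : 0 < Num.sqrt (m%:R : R) by rewrite sqrtr_gt0 ltr0n.
rewrite -[in m%:R^-1](sqr_sqrtr (ler0n R m)).
have -> : 4 * N / Num.sqrt m%:R * M = (Num.sqrt (m%:R : R) ^+ 2)^-1 * (4 * N * Num.sqrt m%:R * M).
  by field; rewrite gt_eqF.
by rewrite ler_pM2l ?invr_gt0 ?exprn_gt0 // (massart_sqrt m_gt0 card_le N_ge1 K_le a_le pickP).
Qed.

End Massart.

Lemma sup_attained (R : realType) (A : set R) (x : R) :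
  A x -> ubound A x -> sup A = x.
Proof.
move=> Ax x_ub; apply/le_anti; rewrite ge_sup /=; [|by exists x|by []].
by apply: ub_le_sup => //; exists x.
Qed.

Lemma rademacher_set0 (R : realType) (X : Type) (m : nat) (S : 'I_m -> X) :
  rademacher (@set0 (X -> R)) S = 0.
Proof. by rewrite /rademacher big1 ?mulr0 // => eps _; rewrite image_set0 sup0. Qed.

Section FiniteClass.
Variables (R : realType) (T X : Type) (I : finType) (P : pred I).
Variables (A : set T) (param : I -> T) (f : T -> X -> R).
Hypothesis A_param : forall t, A t <-> exists2 p, P p & t = param p.
Variables (m : nat) (S : 'I_m -> X).

Lemma le_sup_supnorm (p : I) (i : 'I_m) :
  P p -> `|f (param p) (S i)| <= sup [set supnorm_on (f t) S | t in A].
Proof.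
move=> Pp; apply: le_trans (_ : supnorm_on (f (param p)) S <= _).
  exact: (le_bigmax 0 (fun i => `|f (param p) (S i)|) i).
apply: ub_le_sup; last by exists (param p) => //; apply/A_param; exists p.
exists (\sum_q `|supnorm_on (f (param q)) S|) => _ [_ /A_param [q _ ->] <-].
rewrite (bigD1 q) //=; apply: le_trans (ler_norm _) _; rewrite lerDl.
by apply: sumr_ge0 => *; exact: normr_ge0.
Qed.

Lemma rademacher_finite_class (p0 : I) : P p0 ->
  exists2 pick : {ffun 'I_m -> bool} -> I, (forall e, P (pick e)) &
    rademacher [set f t | t in A] S
    = m%:R^-1 * sign_mean (fun e => sign_sum (fun i => f (param (pick e)) (S i)) e).
Proof.
move=> Pp0; pose h e p := sign_sum (fun i => f (param p) (S i)) e.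
exists (fun e => Order.arg_max p0 P (h e)) => [e|].
  by case: arg_maxP.
rewrite /rademacher /sign_mean [RHS]mulrCA [in RHS]mulr_sumr; congr (_ * _).
apply: eq_bigr => e _; apply: sup_attained.
  case: arg_maxP => // p Pp _; exists (f (param p)) => //.
  by exists (param p) => //; apply/A_param; exists p.
move=> _ [_ [_ /A_param [q Pq ->] <-] <-].
case: arg_maxP => // p _ p_max.
by rewrite ler_wpM2l ?invr_ge0 ?ler0n //; apply: p_max.
Qed.

End FiniteClass.

Section Diagonal.
Variable R : realType.
Local Notation C := (complex R).

Lemma tensn_diag (p n : nat) : exists digit : 'I_n -> 'I_(p ^ n) -> 'I_p,
  forall F : 'I_n -> 'M[C]_p, (forall k, is_diag_mx (F k)) ->
  tensn F = diag_mx (\row_a \prod_(k < n) F k (digit k a) (digit k a)).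
Proof.
elim: n => [|n [digit IH]].
  have no_digit : 'I_0 -> 'I_(p ^ 0) -> 'I_p by case.
  exists no_digit => F _; apply/matrixP => i j.
  by rewrite !mxE big_ord0.
pose split_index (i : 'I_(p ^ n.+1)) := mxtens_unindex (cast_ord (expnS p n) i).
have split_inj : injective split_index.
  move=> x y /(can_inj (@mxtens_unindexK _ _)) /(congr1 val) val_xy.
  by apply: val_inj.
exists (fun k i => if unlift ord0 k is Some k' then digit k' (split_index i).2
                   else (split_index i).1).
move=> F Fdiag.
have -> : tensn F = castmx (esym (expnS p n), esym (expnS p n))
                       (F ord0 *t tensn (fun k => F (lift ord0 k))) by [].
rewrite (IH (fun k => F (lift ord0 k))) //; apply/matrixP => i j.
have cast_i : cast_ord (esym (esym (expnS p n))) i = cast_ord (expnS p n) i by apply: val_inj.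
have cast_j : cast_ord (esym (esym (expnS p n))) j = cast_ord (expnS p n) j by apply: val_inj.
rewrite castmxE cast_i cast_j [LHS]mxE -/(split_index i) -/(split_index j).
rewrite !mxE big_ord_recl unlift_none.
under [in RHS]eq_bigr do rewrite liftK.
have [->|neq_ij] := eqVneq i j; first by rewrite !eqxx.
rewrite mulr0n.
have [e1|ne1] := eqVneq (split_index i).1 (split_index j).1; last first.
  by have /is_diag_mxP -> := Fdiag ord0; rewrite ?mul0r.
have [e2|ne2] := eqVneq (split_index i).2 (split_index j).2; last by rewrite mulr0n mulr0.
case/eqP: neq_ij; apply: split_inj.
by move: e1 e2; case: (split_index i); case: (split_index j) => ? ? ? ? /= -> ->.
Qed.

Lemma diag2P (A : 'M[C]_2) : (forall a b : 'I_2, a != b -> A a b = 0) -> is_diag_mx A.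
Proof. by move=> A0; apply/is_diag_mxP => a b ab; apply: A0; rewrite -(inj_eq val_inj). Qed.

Lemma Zmat_diag : is_diag_mx (Zmat R).
Proof. by apply: diag2P => a b /negPf ab; rewrite mxE ab. Qed.

Lemma P0_diag : is_diag_mx (P0 R).
Proof. by apply: diag2P => - [[|[|a]] ?] [[|[|b]] ?]; rewrite mxE. Qed.

Lemma P1_diag : is_diag_mx (P1 R).
Proof. by apply: diag2P => - [[|[|a]] ?] [[|[|b]] ?]; rewrite mxE. Qed.

Lemma Zmat_sq (a : 'I_2) : Zmat R a a ^+ 2 = 1.
Proof. by rewrite mxE eqxx; case: ifP; rewrite ?sqrrN expr1n. Qed.

Lemma gate_mx_sign (n : nat) (g : gate n) :
  exists2 d : 'rV[C]_(2 ^ n), gate_mx R g = diag_mx d & forall a, d 0 a ^+ 2 = 1.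
Proof.
have [digit tensE] := tensn_diag 2 n.
have one_diag : is_diag_mx (1%:M : 'M[C]_2) := scalar_mx_is_diag _ 1.
case: g => [i|i j] /=.
  rewrite /Zgate tensE => [|k]; last by case: ifP => _; rewrite ?Zmat_diag.
  eexists => // a; rewrite mxE -prodrXl; apply: big1 => k _.
  by case: ifP => _; rewrite ?Zmat_sq // mxE eqxx expr1n.
set Fj := fun k : 'I_n => if k == j then Zmat R else 1%:M.
have Fj_diag k : is_diag_mx (Fj k) by rewrite /Fj; case: ifP; rewrite ?Zmat_diag.
rewrite /CZgate !tensE => [|k|k]; last 2 first.
- by case: ifP => _; rewrite ?P1_diag ?Fj_diag.
- by case: ifP => _; rewrite ?P0_diag.
rewrite -raddfD; eexists => // a; rewrite !mxE.
rewrite (bigD1 i) //= big1 => [|k /negPf ->]; last by rewrite mxE eqxx.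
rewrite (bigD1 i) //= eqxx mulr1.
(* The CZ entry is P0 + P1 * u, where u = +-1 is the Z-factor on qubit j. *)
set u := \prod_(k | k != i) _.
have u_sq : u ^+ 2 = 1.
  rewrite -prodrXl; apply: big1 => k /negPf ->.
  by case: ifP => _; rewrite ?Zmat_sq // mxE eqxx expr1n.
by rewrite !mxE; case: (digit i a) => - [|[|]] //= _; rewrite ?mul0r ?mul1r ?addr0 ?add0r ?expr1n.
Qed.

End Diagonal.

Section Circuits.
Variables (R : realType) (n : nat).
Local Notation C := (complex R).

Definition gate_diag (g : gate n) : 'rV[C]_(2 ^ n) := \row_a gate_mx R g a a.

Lemma gate_mxE (g : gate n) : gate_mx R g = diag_mx (gate_diag g).
Proof.
rewrite /gate_diag; have [d -> _] := gate_mx_sign R g.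
by apply/matrixP => a b; rewrite !mxE eqxx mulr1n.
Qed.

Lemma gate_diag_sq (g : gate n) (a : 'I_(2 ^ n)) : gate_diag g 0 a ^+ 2 = 1.
Proof. by have [d Eg d_sq] := gate_mx_sign R g; rewrite mxE Eg mxE eqxx mulr1n. Qed.

Definition gate_code : finType := ('I_n + 'I_n * 'I_n)%type.

Definition code (g : gate n) : gate_code :=
  match g with GZ i => inl i | GCZ i j => inr (i, j) end.

Definition gate_of (c : gate_code) : gate n :=
  match c with inl i => GZ i | inr ij => GCZ ij.1 ij.2 end.

Lemma codeK : cancel code gate_of.
Proof. by case. Qed.

Definition gate_parity (gs : seq (gate n)) : {ffun gate_code -> bool} :=
  [ffun c => odd (count (fun g => code g == c) gs)].

Definition parity_mx (p : {ffun gate_code -> bool}) : 'M[C]_(2 ^ n) :=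
  diag_mx (\row_a \prod_c gate_diag (gate_of c) 0 a ^+ p c).

Lemma circuit_mx_parity (gs : seq (gate n)) :
  circuit_mx R gs = parity_mx (gate_parity gs).
Proof.
elim: gs => [|g gs IH] /=.
  apply/matrixP => a b; rewrite !mxE big1 // => c _.
  by rewrite ffunE.
rewrite IH gate_mxE /parity_mx mulmx_diag; congr diag_mx; apply/rowP => a.
have diagE : gate_mx R g a a = gate_diag g 0 a by rewrite mxE.
rewrite !mxE diagE (bigD1 (code g)) //= [RHS](bigD1 (code g)) //=.
rewrite codeK !ffunE /= eqxx add1n mulrA; congr (_ * _); last first.
  by apply: eq_bigr => c gc; rewrite !ffunE /= eq_sym (negPf gc).
rewrite oddS; case: (odd _); last by rewrite expr0 mulr1.
by rewrite expr1 -expr2 gate_diag_sq.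
Qed.

End Circuits.

Section CircuitClass.
Variables (R : realType) (n : nat).

Definition parity_channel (p : {ffun gate_code n -> bool}) : channel R n :=
  unitary_channel (Hn R n *m parity_mx R p *m Hn R n).

Definition realizable (p : {ffun gate_code n -> bool}) : bool :=
  `[< exists gs : seq (gate n), [/\ all (@gate_ok n) gs, has (@is_CZ n) gs & gate_parity gs = p] >].

Lemma Iclass_parity (Phi : channel R n) :
  Iclass n Phi <-> exists2 p, realizable p & Phi = parity_channel p.
Proof.
split => [[gs [gs_ok gs_CZ ->]]|[p /asboolP [gs [gs_ok gs_CZ <-]] ->]].
  by exists (gate_parity gs); [apply/asboolP; exists gs | rewrite circuit_mx_parity].
by exists gs; split => //; rewrite circuit_mx_parity.
Qed.

(* A CZ gate needs a qubit. *)
Lemma realizable_qubits (p : {ffun gate_code n -> bool}) : realizable p -> (0 < n)%N.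
Proof.
case/asboolP => gs [_ gs_CZ _]; elim: gs gs_CZ => //= -[i|i j] gs _ //= _.
exact: leq_ltn_trans (ltn_ord i).
Qed.

Lemma card_parities : #|{ffun gate_code n -> bool}| = (2 ^ (n + n * n))%N.
Proof. by rewrite card_ffun card_bool card_sum card_prod card_ord. Qed.

End CircuitClass.

Unset Implicit Arguments.

Theorem mainTheorem8 (R : realType) :
  exists Cst : R,
    forall (n m : nat) (S : 'I_m -> bits n * bits n),
      (0 < m)%N ->
      rademacher (Fclass (Iclass (R:=R) n)) S
      <= Cst * n%:R / Num.sqrt (m%:R)
         * sup [set supnorm_on (fPhi Phi) S | Phi in Iclass (R:=R) n].
Proof.
exists 4 => n m S m_gt0.
have param := @Iclass_parity R n.
have [[p0 p0_ok]|no_parity] := pselect (exists p, @realizable n p); last first.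
  have I0 : Iclass (R:=R) n = set0.
    by apply/seteqP; split => // Phi /param [p p_ok _]; apply: no_parity; exists p.
  by rewrite /Fclass I0 !image_set0 rademacher_set0 sup0 mulr0.
have [pick pickP ->] := rademacher_finite_class (@fPhi R n) param S p0_ok.
apply: (massart_normalized (a := fun p i => fPhi (@parity_channel R n p) (S i)))
  m_gt0 (eq_leq (card_parities n)) _ _
  (fun p p_ok i => le_sup_supnorm (@fPhi R n) param S i p_ok) pickP.
- by rewrite ler1n (realizable_qubits p0_ok).
- by rewrite -natrX -[2 * _](natrM R 2) ler_nat; nia.
Qed.
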